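(* Let $n_1,n_2\in(0,1)$ with $n_1+n_2=1$ and for $N\ge2$ let $N_1=N_1(N),N_2=N_2(N)\in\mathbb{N}$ with $N_1+N_2=N$ and $|N_1/N-n_1|=O(N^{-1})=|N_2/N-n_2|$ as $N\to\infty$. For each $k\in\mathbb{N}$ there exists $c_k>0$ such that for all $N>k$ $$\mathrm{Tr}\big|\gamma^{(k)}_{\mathrm{spin},N_1,N_2}-\gamma^{(k)}_{\mathrm{spin},\infty}\big|\le\frac{c_k}{N},$$ where $\gamma^{(k)}_{\mathrm{spin},N_1,N_2}$ is the $k$-body marginal of $|e_1^{\otimes N_1}\vee e_2^{\otimes N_2}\rangle\langle e_1^{\otimes N_1}\vee e_2^{\otimes N_2}|$ on $(\mathbb{C}^2)^{\otimes N}$ and $$\gamma^{(k)}_{\mathrm{spin},\infty}:=\sum_{j=0}^k\binom{k}{j}n_1^{k-j}n_2^{j}\,\big|e_1^{\otimes(k-j)}\vee e_2^{\otimes j}\big\rangle\big\langle e_1^{\otimes(k-j)}\vee e_2^{\otimes j}\big|.$$ The trace is taken in $(\mathbb{C}^2)^{\otimes k}$.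
   Context: $e_1=\binom10$, $e_2=\binom01$. For orthonormal $e_1,e_2$, $e_1^{\otimes a}\vee e_2^{\otimes b}$ is the unit vector $\binom{a+b}{a}^{-1/2}$ times the sum of all distinct tensor products of $a$ copies of $e_1$ and $b$ copies of $e_2$. The $k$-body marginal of a density matrix on $(\mathbb{C}^2)^{\otimes N}$ is the partial trace over $N-k$ tensor factors. *)

From HB Require Import structures.
From mathcomp Require Import all_boot all_order all_algebra.
From mathcomp Require Import complex.
Set Implicit Arguments. Unset Strict Implicit. Unset Printing Implicit Defensive.
Import Order.TTheory GRing.Theory Num.Theory.
Local Open Scope ring_scope.

Section Defs.
Variable R : rcfType.
Local Notation C := R[i].

(* Computational basis of (C^2)^{\otimes n}: x : 'I_n -> bool,
   false = e_1, true = e_2 in each tensor factor. *)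
Definition qubits (n : nat) := {ffun 'I_n -> bool}.

(* operators on a finite-dimensional space with orthonormal basis T,
   given by their matrix entries *)
Definition Op (T : finType) := T -> T -> C.

Definition op_mul (T : finType) (A B : Op T) : Op T :=
  fun x y => \sum_(z : T) A x z * B z y.
Definition op_adj (T : finType) (A : Op T) : Op T := fun x y => (A y x)^*.
Definition op_sub (T : finType) (A B : Op T) : Op T := fun x y => A x y - B x y.
Definition op_tr (T : finType) (A : Op T) : C := \sum_(x : T) A x x.

Definition op_psd (T : finType) (B : Op T) : Prop :=
  (forall x y, B x y = (B y x)^*) /\
  (forall v : T -> C, 0 <= \sum_(x : T) \sum_(y : T) (v x)^* * B x y * v y).

(* B = |A| = sqrt(A^* A): the (unique) positive semidefinite square root of A^* A *)
Definition is_abs (T : finType) (A B : Op T) : Prop :=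
  op_psd B /\ op_mul B B = op_mul (op_adj A) A.

Definition proj (T : finType) (v : T -> C) : Op T := fun x y => v x * (v y)^*.

(* e_1^{\otimes a} \vee e_2^{\otimes b} in (C^2)^{\otimes n} (zero unless a + b = n):
   binom(a+b,a)^{-1/2} times the sum of all basis tensors with a factors e_1
   and b factors e_2. *)
Definition symvec (n a b : nat) : qubits n -> C :=
  fun x => if (#|[set i | x i]| == b) && (a + b == n)%N
           then ((Num.sqrt ('C(a + b, a))%:R)^-1)%:C%C else 0.

Definition ext_nat (m : nat) (x : qubits m) : nat -> bool :=
  fun j => if @insub nat (fun j => j < m)%N _ j is Some j' then x j' else false.
Definition glue (k N : nat) (x : qubits k) (z : qubits (N - k)) : qubits N :=
  [ffun i : 'I_N => if (i < k)%N then ext_nat x i else ext_nat z (i - k)].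

Definition marginal (k N : nat) (G : Op (qubits N)) : Op (qubits k) :=
  fun x y => \sum_(z : qubits (N - k)) G (glue x z) (glue y z).

Definition gamma_spin (N1 N2 k : nat) : Op (qubits k) :=
  @marginal k (N1 + N2)%N (proj (@symvec (N1 + N2) N1 N2)).

Definition gamma_inf (n1 n2 : R) (k : nat) : Op (qubits k) :=
  fun x y => \sum_(j < k.+1)
     (('C(k, j))%:R * n1 ^+ (k - j) * n2 ^+ j)%:C%C * proj (@symvec k (k - j) j) x y.

End Defs.

From mathcomp Require Import all_boot all_order all_algebra.
From mathcomp Require Import complex.
From mathcomp Require Import lra ring zify.
From Stdlib Require Import FunctionalExtensionality.
Import Order.TTheory GRing.Theory Num.Theory.
Local Open Scope ring_scope.

(* Both the marginal and its limit are weight operators: their (x, y) entry is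
   [m (weight x)] if [weight x = weight y] and 0 otherwise, where the weight counts
   the factors e_2. Such operators compose by [m * m' * 'C(k, _)], so the absolute
   value of [weight_op m] is [weight_op |m|], with trace [\sum_j 'C(k, j) |m j|].
   For the marginal, [m j] is the hypergeometric weight [N2^_j N1^_(k-j) / N^_k],
   a product of [k] ratios such as [(N2 - i) / (N - i)], each within [O(1/N)] of
   [n2] or [n1]; for the limit, [m j = n1^(k-j) n2^j] is the product of the
   corresponding [n1]'s and [n2]'s. As all factors lie in [0, 1], the two products
   differ by at most the sum of the factorwise differences. *)

Definition weight {n} (x : qubits n) : nat := #|[set i | x i]|.

Lemma ext_natE n (x : qubits n) (i : 'I_n) : ext_nat x i = x i.
Proof. by rewrite /ext_nat insubT /= => [|?]; [exact: ltn_ord | congr (x _); apply: val_inj]. Qed.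

Lemma weight_ext_nat n (x : qubits n) : weight x = (\sum_(0 <= i < n) ext_nat x i)%N.
Proof.
rewrite /weight -sum1_card big_mkcond /= big_mkord.
by apply: eq_bigr => i _; rewrite inE ext_natE; case: (x i).
Qed.

Lemma ext_nat_glue k N (x : qubits k) (z : qubits (N - k)) i : (i < N)%N ->
  ext_nat (glue x z) i = if (i < k)%N then ext_nat x i else ext_nat z (i - k).
Proof. by move=> iN; rewrite {1}/ext_nat (insubT (fun j => j < N)%N iN) /= ffunE. Qed.

Lemma weight_glue k N (x : qubits k) (z : qubits (N - k)) :
  (k <= N)%N -> weight (glue x z) = (weight x + weight z)%N.
Proof.
move=> kN; rewrite !weight_ext_nat (big_cat_nat (leq0n k) kN) /=; congr (_ + _)%N.
  rewrite !big_nat; apply: eq_bigr => i /andP [_ ik].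
  by rewrite ext_nat_glue ?ik // (leq_trans ik kN).
rewrite -{1}(add0n k) big_addn !big_nat; apply: eq_bigr => i /andP [_ iNk].
by rewrite ext_nat_glue ?ltnNge ?leq_addl /= ?addnK //; lia.
Qed.

Lemma weight_le {n} (x : qubits n) : (weight x <= n)%N.
Proof. by rewrite /weight (leq_trans (max_card _)) ?card_ord. Qed.

Lemma card_weight n j : #|[pred x : qubits n | weight x == j]| = 'C(n, j).
Proof.
rewrite -[in RHS](card_ord n) -card_draws.
pose supp (x : qubits n) := [set i | x i].
have supp_inj : injective supp.
  by move=> x y /setP xy; apply/ffunP => i; move: (xy i); rewrite !inE.
rewrite -(card_imset _ supp_inj); apply: eq_card => A; rewrite !inE.
apply/imsetP/idP => [[x] | /eqP <-]; first by rewrite inE => /eqP <- ->.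
exists [ffun i => i \in A]; last by apply/setP => i; rewrite inE ffunE.
by rewrite inE; apply/eqP/eq_card => i; rewrite inE ffunE.
Qed.

Lemma sum_weight_eq (V : nmodType) n j (c : V) :
  \sum_(x : qubits n) (if weight x == j then c else 0) = c *+ 'C(n, j).
Proof. by rewrite -big_mkcond /= sumr_const -card_weight. Qed.

Lemma sum_by_weight (V : nmodType) n (G : qubits n -> V) :
  \sum_x G x = \sum_(j < n.+1) \sum_(x | weight x == j) G x.
Proof.
under [RHS]eq_bigr do rewrite big_mkcond /=.
rewrite exchange_big /=; apply: eq_bigr => x _.
have wx : (weight x < n.+1)%N by rewrite ltnS weight_le.
rewrite (bigD1 (Ordinal wx)) //= eqxx big1 ?addr0 // => j ne_j.
by case: eqP => // wxj; case/eqP: ne_j; apply: val_inj.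
Qed.

Lemma ffact_add n j m : (n ^_ (j + m) = n ^_ j * (n - j) ^_ m)%N.
Proof.
elim: m => [|m IH]; first by rewrite addn0 muln1.
by rewrite addnS !ffactnSr IH subnDA mulnA.
Qed.

Lemma bin_ffact_mul a b j k : (j <= a)%N -> (j <= k)%N -> (k <= a + b)%N ->
  ('C(a + b - k, a - j) * (a + b) ^_ k = 'C(a + b, a) * (a ^_ j * b ^_ (k - j)))%N.
Proof.
move=> ja jk kab; have [kjb | bkj] := leqP (k - j) b; last first.
  by rewrite bin_small ?(ffact_small bkj) ?muln0 //; lia.
have ajk : (a - j <= a + b - k)%N by lia.
have eC := bin_fact ajk.
rewrite (_ : a + b - k - (a - j) = b - (k - j))%N in eC; last by lia.
have eN := ffact_fact kab.
have eCN := bin_fact (leq_addr b a); rewrite addKn in eCN.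
have ea := ffact_fact ja; have eb := ffact_fact kjb.
set fa := (a - j)`! in eC ea; set fb := (b - (k - j))`! in eC eb.
set fc := (a + b - k)`! in eC eN.
apply/eqP; rewrite -(@eqn_pmul2r (fa * fb * fc)) ?muln_gt0 ?fact_gt0 //; apply/eqP.
transitivity ('C(a + b - k, a - j) * (fa * fb) * ((a + b) ^_ k * fc))%N; first by ring.
rewrite eC eN; transitivity ('C(a + b, a) * ((a ^_ j * fa) * (b ^_ (k - j) * fb)) * fc)%N.
  by rewrite ea eb eCN mulnC.
ring.
Qed.

Section WeightOperators.
Context {R : rcfType}.
Local Notation C := R[i].

Definition weight_op k (m : nat -> R) : Op R (qubits k) :=
  fun x y => if weight x == weight y then (m (weight x))%:C%C else 0.

Lemma weight_op_adj k m : op_adj (weight_op k m) = weight_op k m.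
Proof.
apply: functional_extensionality => x; apply: functional_extensionality => y.
rewrite /op_adj /weight_op eq_sym; case: eqP => [->|_]; first exact: conjc_real.
exact: (rmorph0 Num.conj).
Qed.

Lemma weight_op_mul k m m' : op_mul (weight_op k m) (weight_op k m') =
  weight_op k (fun j => m j * m' j * 'C(k, j)%:R).
Proof.
apply: functional_extensionality => x; apply: functional_extensionality => y.
rewrite /op_mul /weight_op; case: eqP => [<- | ne_xy].
  rewrite (eq_bigr (fun z =>
      if weight z == weight x then (m (weight x) * m' (weight x))%:C%C else 0)).
    by rewrite sum_weight_eq mulr_natr raddfMn.
  by move=> z _; rewrite eq_sym; case: eqP => [<-|_]; rewrite ?eqxx ?mul0r ?rmorphM.
rewrite big1 // => z _; case: eqP => [wxz|]; last by rewrite mul0r.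
by case: eqP => [wzy|]; [case: ne_xy; rewrite wxz | rewrite mulr0].
Qed.

Lemma weight_op_tr k m :
  op_tr (weight_op k m) = (\sum_(j < k.+1) 'C(k, j)%:R * m j)%:C%C.
Proof.
rewrite /op_tr /weight_op rmorph_sum /= sum_by_weight; apply: eq_bigr => j _.
rewrite (eq_bigr (fun _ => (m j)%:C%C)); last by move=> x /eqP ->; rewrite eqxx.
by rewrite sumr_const -card_weight mulr_natl raddfMn.
Qed.

Lemma weight_op_psd k m : (forall j, 0 <= m j) -> op_psd (weight_op k m).
Proof.
move=> m_ge0; split=> [x y | v]; first by rewrite -{1}weight_op_adj.
have row_sum x : \sum_y (v x)^* * weight_op k m x y * v y =
    (v x)^* * (m (weight x))%:C%C * \sum_(y | weight y == weight x) v y.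
  rewrite mulr_sumr [RHS]big_mkcond /=; apply: eq_bigr => y _.
  by rewrite /weight_op eq_sym; case: eqP; rewrite ?mulr0 ?mul0r ?mulrA.
under eq_bigr do rewrite row_sum.
rewrite sum_by_weight sumr_ge0 // => j _.
under eq_bigr => x /eqP -> do rewrite -mulrA.
rewrite -mulr_suml -rmorph_sum mulrCA mulr_ge0 ?ler0c //.
by rewrite mulrC mul_conjC_ge0.
Qed.

Lemma is_abs_weight_op k d :
  is_abs (weight_op k d) (weight_op k (fun j => `|d j|)).
Proof.
split; first by apply: weight_op_psd => j; exact: normr_ge0.
rewrite weight_op_adj !weight_op_mul; congr weight_op.
by apply: functional_extensionality => j; rewrite -!expr2 real_normK ?num_real.
Qed.

Lemma op_sub_weight_op k m m' :
  op_sub (weight_op k m) (weight_op k m') = weight_op k (fun j => m j - m' j).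
Proof.
apply: functional_extensionality => x; apply: functional_extensionality => y.
by rewrite /op_sub /weight_op raddfB; case: eqP; rewrite ?subr0.
Qed.
End WeightOperators.

Section Entries.
Context {R : rcfType}.
Local Notation C := R[i].

(* The hypergeometric probability of drawing [j] factors e_2 (and [k - j] factors e_1)
   in [k] draws without replacement from [N1] factors e_1 and [N2] factors e_2. *)
Definition spin_weight (N1 N2 k j : nat) : R :=
  (N2 ^_ j * N1 ^_ (k - j))%:R / ((N1 + N2) ^_ k)%:R.

Definition binom_weight (n1 n2 : R) (k j : nat) : R := n1 ^+ (k - j) * n2 ^+ j.

Lemma symvecE n a b (x : qubits n) : (a + b)%N = n ->
  symvec R a b x = if weight x == b then ((Num.sqrt 'C(n, a)%:R)^-1)%:C%C else 0 :> C.
Proof. by move=> abn; rewrite /symvec abn eqxx andbT. Qed.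

Lemma inv_sqrt_mul_conj (c : nat) :
  ((Num.sqrt (c%:R : R))^-1)%:C%C * ((Num.sqrt (c%:R : R))^-1)%:C%C^* = (c%:R^-1)%:C%C.
Proof.
rewrite [_^*](conjc_real (Num.sqrt (c%:R : R))^-1).
by rewrite -rmorphM /= -invfM -expr2 sqr_sqrtr.
Qed.

Lemma spin_weightE N1 N2 k j : (j <= k)%N -> (k <= N1 + N2)%N ->
  spin_weight N1 N2 k j =
    if (j <= N2)%N then 'C(N1 + N2 - k, N2 - j)%:R / 'C(N1 + N2, N1)%:R else 0.
Proof.
move=> jk kN; rewrite /spin_weight; case: leqP => [jN2 | N2j]; last first.
  by rewrite ffact_small ?mul0n ?mul0r.
have binN_gt0 : ('C(N1 + N2, N2)%:R : R) != 0 by rewrite pnatr_eq0 -lt0n bin_gt0 leq_addl.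
have ffactN_gt0 : ((N1 + N2) ^_ k)%:R != 0 :> R by rewrite pnatr_eq0 -lt0n ffact_gt0.
rewrite -(bin_sub (leq_addr N2 N1)) addKn; apply/eqP.
rewrite eqr_div // -!natrM [(N1 + N2)%N]addnC mulnC -bin_ffact_mul //; lia.
Qed.

Lemma gamma_spinE N1 N2 k : (k <= N1 + N2)%N ->
  @gamma_spin R N1 N2 k = weight_op k (spin_weight N1 N2 k).
Proof.
move=> kN; apply: functional_extensionality => x; apply: functional_extensionality => y.
rewrite /gamma_spin /marginal /proj /weight_op.
under eq_bigr => z _ do rewrite !symvecE // !weight_glue //.
have wx := weight_le x.
case: eqP => [<- | ne_xy]; last first.
  rewrite big1 // => z _; do 2 case: eqP => ?; rewrite ?conjC0 ?mul0r ?mulr0 //.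
  by case: ne_xy; lia.
rewrite spin_weightE //; case: leqP => [xN2 | N2x]; last first.
  by rewrite big1 // => z _; case: eqP => ?; rewrite ?mul0r //; lia.
rewrite (eq_bigr (fun z => if weight z == (N2 - weight x)%N
    then (('C(N1 + N2, N1)%:R : R)^-1)%:C%C else 0)).
  by rewrite sum_weight_eq -raddfMn /= mulr_natl.
by move=> z _; do 2 case: eqP => ?; rewrite ?inv_sqrt_mul_conj ?mul0r //; exfalso; lia.
Qed.

Lemma gamma_infE n1 n2 k : @gamma_inf R n1 n2 k = weight_op k (binom_weight n1 n2 k).
Proof.
apply: functional_extensionality => x; apply: functional_extensionality => y.
have wx : (weight x < k.+1)%N by rewrite ltnS weight_le.
rewrite /gamma_inf (bigD1 (Ordinal wx)) //= big1 ?addr0; last first.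
  move=> j ne_j; have jk : (j <= k)%N := ltn_ord j.
  rewrite /proj symvecE ?subnK //.
  by case: eqP => [wxj|]; rewrite ?mul0r ?mulr0 //; case/eqP: ne_j; apply: val_inj.
rewrite /proj !symvecE ?subnK ?weight_le // eqxx /weight_op [weight y == _]eq_sym.
case: eqP => _; last by rewrite conjC0 !mulr0.
rewrite -mulrA inv_sqrt_mul_conj bin_sub ?weight_le // -rmorphM /=; congr (_%:C)%C.
have binC_gt0 : 'C(k, weight x)%:R != 0 :> R by rewrite pnatr_eq0 -lt0n bin_gt0 weight_le.
by rewrite /binom_weight; field.
Qed.
End Entries.

Lemma prodr_in01 {R : numDomainType} {I : Type} (s : seq I) (F : I -> R) :
  (forall i, 0 <= F i <= 1) -> 0 <= \prod_(i <- s) F i <= 1.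
Proof. by move=> F01; rewrite prodr_ge0 ?prodr_ile1 // => i _; case/andP: (F01 i) => ? ?. Qed.

Lemma norm_prod_sub_le {R : numDomainType} {I : Type} (s : seq I) (f g : I -> R) :
  (forall i, `|f i| <= 1) -> (forall i, `|g i| <= 1) ->
  `|\prod_(i <- s) f i - \prod_(i <- s) g i| <= \sum_(i <- s) `|f i - g i|.
Proof.
move=> f_le1 g_le1; elim: s => [|a s IH]; first by rewrite !big_nil subrr normr0.
rewrite !big_cons; set P := \prod_(i <- s) f i; set Q := \prod_(i <- s) g i.
have P_le1 : `|P| <= 1 by rewrite /P normr_prod prodr_ile1 // => i _; rewrite normr_ge0 f_le1.
have -> : f a * P - g a * Q = (f a - g a) * P + g a * (P - Q) by ring.
apply: le_trans (ler_normD _ _) _; rewrite !normrM.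
by apply: lerD; [apply: ler_piMr | apply: le_trans IH; apply: ler_piMl].
Qed.

Lemma norm_mul_sub_le {R : numDomainType} (x y u v : R) : `|y| <= 1 -> `|u| <= 1 ->
  `|x * y - u * v| <= `|x - u| + `|y - v|.
Proof.
move=> y_le1 u_le1; have -> : x * y - u * v = (x - u) * y + u * (y - v) by ring.
apply: le_trans (ler_normD _ _) _; rewrite !normrM.
by apply: lerD; [apply: ler_piMr | apply: ler_piMl].
Qed.

Section RatioBounds.
Context {R : realFieldType}.

Lemma natr_div_ge0_le1 (u v : nat) : (u <= v)%N -> 0 <= (u%:R / v%:R : R) <= 1.
Proof.
move=> uv; rewrite divr_ge0 //=; case: (posnP v) => [v0 | v_gt0].
  by move: uv; rewrite v0 leqn0 => /eqP ->; rewrite mul0r.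
by rewrite ler_pdivrMr ?ltr0n // mul1r ler_nat.
Qed.

Lemma norm_shifted_count_le (a i l k N : nat) (n K : R) :
  (i <= l <= k)%N -> (l <= N)%N -> 0 <= n <= 1 -> `|a%:R - n * N%:R| <= K ->
  `|(a - i)%:R - n * (N - l)%:R| <= K + k%:R.
Proof.
move=> /andP [il lk] lN /andP [n_ge0 n_le1]; rewrite (natrB _ lN).
have li : i%:R <= l%:R :> R by rewrite ler_nat.
have lk' : l%:R <= k%:R :> R by rewrite ler_nat.
have i_ge0 : 0 <= i%:R :> R := ler0n _ _.
have nl_le : n * l%:R <= l%:R by rewrite ler_piMl.
have nl_ge0 : 0 <= n * l%:R by rewrite mulr_ge0.
have [ia | ai] := leqP i a; rewrite ler_norml => /andP [Klo Khi].
  rewrite natrB // ler_norml; apply/andP; split; nra.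
have ak : a%:R <= k%:R :> R by rewrite ler_nat ltnW // (leq_trans ai) // (leq_trans il).
have nN : n * l%:R <= n * N%:R by rewrite ler_wpM2l // ler_nat.
have -> : (a - i)%N = 0%N by apply/eqP; rewrite subn_eq0 ltnW.
rewrite ler_norml; apply/andP; split; nra.
Qed.

Lemma norm_shifted_ratio_le (a i l k N : nat) (n K : R) :
  (i <= l < k)%N -> (k < N)%N -> 0 <= n <= 1 -> `|a%:R - n * N%:R| <= K ->
  `|(a - i)%:R / (N - l)%:R - n| <= (K + k%:R) * k.+1%:R / N%:R.
Proof.
move=> /andP [il lk] kN n01 devK.
have m_gt0 : 0 < (N - l)%:R :> R by rewrite ltr0n subn_gt0 (ltn_trans lk).
have -> : (a - i)%:R / (N - l)%:R - n = ((a - i)%:R - n * (N - l)%:R) / (N - l)%:R.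
  by field; rewrite gt_eqF.
rewrite normrM normfV (gtr0_norm m_gt0) -mulrA.
have K_ge0 : 0 <= K + k%:R by rewrite addr_ge0 // (le_trans _ devK).
apply: ler_pM => //; first by rewrite invr_ge0 ltW.
  apply: norm_shifted_count_le => //; first by rewrite il ltnW.
  exact: ltnW (ltn_trans lk kN).
rewrite ler_pdivlMr ?ltr0n ?(leq_ltn_trans (leq0n k) kN) // mulrC ler_pdivrMr //.
by rewrite -natrM ler_nat; nia.
Qed.

Lemma scale_dev_le (a n K : R) (N : nat) : (0 < N)%N ->
  `|a / N%:R - n| <= K / N%:R -> `|a - n * N%:R| <= K.
Proof.
move=> N_gt0 dev; have N0 : N%:R != 0 :> R by rewrite pnatr_eq0 -lt0n.
have -> : a - n * N%:R = (a / N%:R - n) * N%:R by field.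
by rewrite normrM normr_nat -ler_pdivlMr ?ltr0n.
Qed.

Lemma le_div_eventually (x c M : R) (N N0 : nat) : (0 < N)%N -> 0 <= c -> 0 <= M ->
  x <= M -> ((N0 <= N)%N -> x <= c / N%:R) -> x <= (c + M * N0%:R) / N%:R.
Proof.
move=> N_gt0 c_ge0 M_ge0 x_le eventually; rewrite mulrDl.
have MN0 : 0 <= M * N0%:R / N%:R by rewrite !mulr_ge0 ?invr_ge0.
have [N0N | NN0] := leqP N0 N; first by rewrite ler_wpDr ?eventually.
rewrite ler_wpDl ?divr_ge0 // (le_trans x_le) // -mulrA ler_peMr //.
by rewrite ler_pdivlMr ?ltr0n // mul1r ler_nat ltnW.
Qed.

Lemma sum_bin_natr k : \sum_(j < k.+1) 'C(k, j)%:R = 2 ^+ k :> R.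
Proof.
rewrite -natr_sum -natrX (_ : 2 = 1 + 1)%N // expnDn.
by congr (_%:R); apply: eq_bigr => j _; rewrite !exp1n !muln1.
Qed.

Lemma sum_bin_mul_le k (d : nat -> R) e : (forall j, (j <= k)%N -> d j <= e) ->
  \sum_(j < k.+1) 'C(k, j)%:R * d j <= 2 ^+ k * e.
Proof.
move=> d_le; rewrite -sum_bin_natr mulr_suml; apply: ler_sum => j _.
by apply: ler_wpM2l => //; exact: d_le (ltn_ord j).
Qed.
End RatioBounds.

Section WeightBounds.
Context {R : rcfType}.

Lemma spin_weight_prod N1 N2 k j : (j <= k)%N ->
  spin_weight N1 N2 k j =
    \prod_(i < j) ((N2 - i)%:R / (N1 + N2 - i)%:R) *
    \prod_(i < k - j) ((N1 - i)%:R / (N1 + N2 - (j + i))%:R) :> R.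
Proof.
move=> jk; rewrite /spin_weight -{2}(subnKC jk) ffact_add !natrM -mulf_div.
rewrite !ffact_prod !natr_prod !prodf_div; congr (_ * (_ / _)).
by apply: eq_bigr => i _; rewrite subnDA.
Qed.

Lemma spin_weight_small N1 N2 k j : (N2 < j)%N -> spin_weight N1 N2 k j = 0 :> R.
Proof. by move=> N2j; rewrite /spin_weight ffact_small ?mul0n ?mul0r. Qed.

Lemma spin_weight_in01 N1 N2 k j : (j <= k)%N ->
  0 <= (spin_weight N1 N2 k j : R) <= 1.
Proof.
move=> jk; have [jN2 | N2j] := leqP j N2; last by rewrite spin_weight_small ?lexx ?ler01.
have f01 (i : 'I_j) : 0 <= ((N2 - i)%:R / (N1 + N2 - i)%:R : R) <= 1.
  by apply: natr_div_ge0_le1; lia.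
have g01 (i : 'I_(k - j)) : 0 <= ((N1 - i)%:R / (N1 + N2 - (j + i))%:R : R) <= 1.
  by apply: natr_div_ge0_le1; lia.
case/andP: (prodr_in01 (index_enum _) _ f01) => f_ge0 f_le1.
case/andP: (prodr_in01 (index_enum _) _ g01) => g_ge0 g_le1.
by rewrite spin_weight_prod // mulr_ge0 // mulr_ile1.
Qed.

Lemma binom_weight_in01 (n1 n2 : R) k j : 0 <= n1 <= 1 -> 0 <= n2 <= 1 ->
  0 <= binom_weight n1 n2 k j <= 1.
Proof.
move=> /andP [n1_ge0 n1_le1] /andP [n2_ge0 n2_le1].
by rewrite mulr_ge0 ?exprn_ge0 // mulr_ile1 ?exprn_ge0 ?exprn_ile1.
Qed.
End WeightBounds.

Section WeightDistance.
Context {R : rcfType}.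
Variables (n1 n2 K : R) (N1 N2 k : nat).
Hypotheses (n1_01 : 0 <= n1 <= 1) (n2_01 : 0 <= n2 <= 1) (kN : (k < N1 + N2)%N).
Hypotheses (dev1 : `|N1%:R - n1 * (N1 + N2)%:R| <= K)
           (dev2 : `|N2%:R - n2 * (N1 + N2)%:R| <= K).

Let F := (K + k%:R) * k.+1%:R / (N1 + N2)%:R.

Lemma dist_weight_le1 j : (j <= k)%N ->
  `|spin_weight N1 N2 k j - binom_weight n1 n2 k j| <= 1.
Proof.
move=> jk; have /andP [s0 s1] : 0 <= (spin_weight N1 N2 k j : R) <= 1.
  exact: spin_weight_in01.
have /andP [b0 b1] := binom_weight_in01 n1 n2 k j n1_01 n2_01.
by rewrite ler_norml; apply/andP; split; lra.
Qed.

Lemma dist_weight_small j : (j <= k)%N -> (N2 < j)%N ->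
  `|spin_weight N1 N2 k j - binom_weight n1 n2 k j| <= k%:R * F.
Proof.
move=> jk N2j; case/andP: n1_01 n2_01 => n1_ge0 n1_le1 /andP [n2_ge0 n2_le1].
rewrite spin_weight_small // sub0r normrN ger0_norm ?mulr_ge0 ?exprn_ge0 //.
have N_gt0 : 0 < (N1 + N2)%:R :> R by rewrite ltr0n; lia.
have b_le : binom_weight n1 n2 k j <= n2.
  rewrite /binom_weight -(prednK (leq_ltn_trans (leq0n _) N2j)) exprS mulrCA.
  by rewrite ler_piMr // mulr_ile1 ?exprn_ge0 ?exprn_ile1.
have n2_le : n2 <= (K + k%:R) / (N1 + N2)%:R.
  rewrite ler_pdivlMr //; move: dev2; rewrite ler_norml => /andP [dev2_lo _].
  have : (N2%:R : R) <= k%:R by rewrite ler_nat ltnW // (leq_trans N2j).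
  lra.
apply: le_trans b_le (le_trans n2_le _).
have -> : k%:R * F = (K + k%:R) / (N1 + N2)%:R * (k * k.+1)%:R by rewrite /F natrM; ring.
rewrite ler_peMr ?divr_ge0 ?addr_ge0 ?(le_trans _ dev2) //.
have k_gt0 : (0 < k)%N := leq_ltn_trans (leq0n N2) (leq_trans N2j jk).
by rewrite ler1n muln_gt0 k_gt0.
Qed.

Lemma dist_weight_le j : (j <= k)%N ->
  `|spin_weight N1 N2 k j - binom_weight n1 n2 k j| <= k%:R * F.
Proof.
move=> jk; have [jN2 | N2j] := leqP j N2; last exact: dist_weight_small.
set f := fun i : 'I_j => (N2 - i)%:R / (N1 + N2 - i)%:R : R.
set g := fun i : 'I_(k - j) => (N1 - i)%:R / (N1 + N2 - (j + i))%:R : R.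
have f01 i : 0 <= f i <= 1 by apply: natr_div_ge0_le1; lia.
have g01 i : 0 <= g i <= 1 by apply: natr_div_ge0_le1; lia.
have norm_le1 (x : R) : 0 <= x <= 1 -> `|x| <= 1.
  by case/andP=> x0 x1; rewrite ger0_norm.
have f_dev i : `|f i - n2| <= F.
  by apply: norm_shifted_ratio_le; rewrite ?leqnn ?(leq_trans (ltn_ord i)) //.
have g_dev i : `|g i - n1| <= F.
  apply: norm_shifted_ratio_le; rewrite ?leq_addl //; have := ltn_ord i; lia.
have -> : binom_weight n1 n2 k j = \prod_(i < j) n2 * \prod_(i < k - j) n1.
  by rewrite /binom_weight mulrC !prodr_const !card_ord.
rewrite spin_weight_prod //.
apply: le_trans (norm_mul_sub_le _ _ _ _
  (norm_le1 _ (prodr_in01 _ _ g01)) (norm_le1 _ (prodr_in01 _ _ (fun _ => n2_01)))) _.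
apply: le_trans (lerD
  (norm_prod_sub_le _ _ _ (fun i => norm_le1 _ (f01 i)) (fun _ => norm_le1 _ n2_01))
  (norm_prod_sub_le _ _ _ (fun i => norm_le1 _ (g01 i)) (fun _ => norm_le1 _ n1_01))) _.
have -> : k%:R * F = j%:R * F + (k - j)%:R * F by rewrite -mulrDl -natrD subnKC.
apply: lerD.
- by apply: le_trans (ler_sum _ (fun i _ => f_dev i)) _; rewrite sumr_const card_ord mulr_natl.
by apply: le_trans (ler_sum _ (fun i _ => g_dev i)) _; rewrite sumr_const card_ord mulr_natl.
Qed.
End WeightDistance.

Lemma trace_dist_le {R : rcfType} {n1 n2 K : R} {N1 N2 k N0 : nat} :
  0 <= n1 <= 1 -> 0 <= n2 <= 1 -> 0 <= K -> (k < N1 + N2)%N ->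
  ((N0 <= N1 + N2)%N -> `|N1%:R - n1 * (N1 + N2)%:R| <= K /\
                        `|N2%:R - n2 * (N1 + N2)%:R| <= K) ->
  \sum_(j < k.+1) 'C(k, j)%:R * `|spin_weight N1 N2 k j - binom_weight n1 n2 k j|
    <= 2 ^+ k * (k%:R * ((K + k%:R) * k.+1%:R) + N0%:R) / (N1 + N2)%:R.
Proof.
move=> n1_01 n2_01 K_ge0 kN dev; rewrite mulrDr.
pose d j := `|spin_weight N1 N2 k j - binom_weight n1 n2 k j|.
apply: le_div_eventually; rewrite ?(leq_ltn_trans (leq0n k)) ?mulr_ge0 ?addr_ge0 ?exprn_ge0 //.
  by rewrite -[2 ^+ k]mulr1; apply: (sum_bin_mul_le k d) => j; apply: dist_weight_le1.
move=> /dev [dev1 dev2]; rewrite -2!mulrA.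
by apply: (sum_bin_mul_le k d) => j; apply: dist_weight_le.
Qed.

Theorem mainTheorem4 (R : rcfType) (n1 n2 : R) (N1 N2 : nat -> nat) :
  0 < n1 < 1 -> 0 < n2 < 1 -> n1 + n2 = 1 ->
  (forall N : nat, (2 <= N)%N -> (N1 N + N2 N)%N = N) ->
  (exists (K : R) (N0 : nat), forall N : nat, (N0 <= N)%N ->
      `|(N1 N)%:R / N%:R - n1| <= K / N%:R /\
      `|(N2 N)%:R / N%:R - n2| <= K / N%:R) ->
  forall k : nat, exists c : R, 0 < c /\
    forall N : nat, (2 <= N)%N -> (k < N)%N ->
      exists B : Op R (qubits k),
        is_abs (op_sub (@gamma_spin R (N1 N) (N2 N) k) (@gamma_inf R n1 n2 k)) B /\
        op_tr B <= (c / N%:R)%:C%C.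
Proof.
move=> /andP [n1_gt0 n1_lt1] /andP [n2_gt0 n2_lt1] _ sumN [K0 [N0 devK0]] k.
have n1_01 : 0 <= n1 <= 1 by rewrite !ltW.
have n2_01 : 0 <= n2 <= 1 by rewrite !ltW.
set K := `|K0|.
set c := 2 ^+ k * (k%:R * ((K + k%:R) * k.+1%:R) + N0%:R).
have c_ge0 : 0 <= c by rewrite /c /K mulr_ge0 ?exprn_ge0 ?addr_ge0 ?mulr_ge0 ?addr_ge0.
exists (c + 1); split=> [|N N_ge2 kN]; first exact: ltr_wpDl c_ge0 ltr01.
have N_gt0 : (0 < N)%N by apply: leq_trans N_ge2.
have dev : (N0 <= N1 N + N2 N)%N -> `|(N1 N)%:R - n1 * (N1 N + N2 N)%:R| <= K /\
                                     `|(N2 N)%:R - n2 * (N1 N + N2 N)%:R| <= K.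
  rewrite sumN // => /devK0 [dev1 dev2].
  have le_K (x : R) : x <= K0 -> x <= K by move=> xK0; apply: le_trans xK0 (ler_norm K0).
  by split; apply: le_K; apply: scale_dev_le.
have kN' : (k < N1 N + N2 N)%N by rewrite sumN.
rewrite (gamma_spinE _ _ _ (ltnW kN')) gamma_infE op_sub_weight_op.
eexists; split; first exact: is_abs_weight_op.
rewrite weight_op_tr lecR.
rewrite (le_trans (trace_dist_le n1_01 n2_01 (normr_ge0 K0) kN' dev)) ?sumN //.
by rewrite ler_wpM2r ?invr_ge0 ?lerDl.
Qed.
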